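(* The join $\mathsf V(M_2)\vee\mathbf N$ is the unique maximal (proper) subvariety of $\mathsf V(S_7)$: it is a proper subvariety, and every proper subvariety of $\mathsf V(S_7)$ is contained in it.
   Context: $S_7$ is the ai-semiring on $\{\infty,a,1\}$ with $x+x=x$, $x+y=\infty$ for $x\neq y$, and commutative multiplication with $\infty$ a zero, $a\cdot a=\infty$, $a\cdot 1=a$, $1\cdot1=1$; $\mathsf V(S_7)$ is the variety it generates. $M_2$ is the two-element ai-semiring $\{1,\infty\}$ with $1+\infty=\infty$, $x+x=x$, $1\cdot1=1$ and $\infty$ a multiplicative zero. $\mathbf N$ is the subvariety of $\mathsf V(S_7)$ defined by $x^2y\approx x^2$. $\mathcal V_1\vee\mathcal V_2$ denotes the smallest variety containing both. *)

Record algebra : Type := Algebra {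
  car :> Type;
  add : car -> car -> car;
  mul : car -> car -> car
}.

Inductive term : Type :=
| Var : nat -> term
| Add : term -> term -> term
| Mul : term -> term -> term.

Fixpoint eval (A : algebra) (v : nat -> car A) (t : term) : car A :=
  match t with
  | Var n => v n
  | Add s u => add A (eval A v s) (eval A v u)
  | Mul s u => mul A (eval A v s) (eval A v u)
  end.

Definition identity : Type := (term * term)%type.

Definition sat (A : algebra) (e : identity) : Prop :=
  forall v : nat -> car A, eval A v (fst e) = eval A v (snd e).

Definition aclass : Type := algebra -> Prop.

Definition is_variety (K : aclass) : Prop :=
  exists Sigma : identity -> Prop,
    forall A : algebra, K A <-> (forall e, Sigma e -> sat A e).

Definition gen (C : aclass) : aclass :=
  fun B => forall K : aclass, is_variety K -> (forall A, C A -> K A) -> K B.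

Definition Vgen (A : algebra) : aclass := gen (fun X => X = A).

Definition vjoin (V1 V2 : aclass) : aclass := gen (fun X => V1 X \/ V2 X).

Definition subclass (K1 K2 : aclass) : Prop := forall A, K1 A -> K2 A.

Definition proper_subvariety (K V : aclass) : Prop :=
  is_variety K /\ subclass K V /\ exists A, V A /\ ~ K A.

Inductive s7 : Type := S7inf | S7a | S7one.

Definition s7_eqb (x y : s7) : bool :=
  match x, y with
  | S7inf, S7inf | S7a, S7a | S7one, S7one => true
  | _, _ => false
  end.

Definition s7_add (x y : s7) : s7 := if s7_eqb x y then x else S7inf.

Definition s7_mul (x y : s7) : s7 :=
  match x, y with
  | S7inf, _ | _, S7inf => S7inf
  | S7a, S7a => S7inf
  | S7a, S7one | S7one, S7a => S7a
  | S7one, S7one => S7one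
  end.

Definition S7 : algebra := Algebra s7 s7_add s7_mul.

Inductive m2 : Type := M2one | M2inf.

Definition m2_add (x y : m2) : m2 :=
  match x, y with
  | M2one, M2one => M2one
  | _, _ => M2inf
  end.

Definition m2_mul (x y : m2) : m2 :=
  match x, y with
  | M2one, M2one => M2one
  | _, _ => M2inf
  end.

Definition M2 : algebra := Algebra m2 m2_add m2_mul.

Definition x_ : term := Var 0.
Definition y_ : term := Var 1.

Definition N_identity : identity := (Mul (Mul x_ x_) y_, Mul x_ x_).

Definition Nvar : aclass := fun B => Vgen S7 B /\ sat B N_identity.

From Stdlib Require Import Arith Bool Classical ClassicalEpsilon ProofIrrelevance FunctionalExtensionality.

(* An identity failing in S7 identifies two of the terms x^2, x^2 y, x^2 y^2 (the images of
   1, a, oo under a substitution that is a homomorphism modulo the identities of S7), and this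
   yields x^2 y ~ x^2 y^2 in every proper subvariety; S7 itself fails it at x = 1, y = a.

   Conversely let B in V(S7) satisfy x^2 y ~ x^2 y^2, and let u ~ v hold in M2 and in N.
   Holding in M2 means that u and v have the same variables.  Call a term alive when each of
   its variables takes the value a in some evaluation of the term to a.  For alive u, N
   contains a quotient of a subalgebra of a power of S7 separating u from every term that
   fails to be a somewhere u is a; hence u and v are a under the same evaluations, which
   makes u ~ v an identity of S7.  A term that is not alive satisfies t ~ t^2 in B, and
   squares with the same variables agree in S7. *)

Lemma gen_iff (C : aclass) (B : algebra) :
  gen C B <-> (forall e, (forall A, C A -> sat A e) -> sat B e).
Proof.
  split.
  - intros HB e He.
    apply (HB (fun X => forall e, (forall A, C A -> sat A e) -> sat X e)); [| | exact He].
    + exists (fun e => forall A, C A -> sat A e). intro; reflexivity.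
    + intros A HA e' He'. exact (He' A HA).
  - intros HB K [Sigma HSigma] HC. apply HSigma. intros e He. apply HB.
    intros A HA. exact (proj1 (HSigma A) (HC A HA) e He).
Qed.

Lemma gen_is_variety (C : aclass) : is_variety (gen C).
Proof. exists (fun e => forall A, C A -> sat A e). intro; apply gen_iff. Qed.

Lemma Vgen_iff (A B : algebra) : Vgen A B <-> (forall e, sat A e -> sat B e).
Proof.
  unfold Vgen; rewrite gen_iff. split; intros HB e He; apply HB.
  - intros X ->; exact He.
  - exact (He A eq_refl).
Qed.

Lemma variety_omits_identity (K : aclass) (A : algebra) :
  is_variety K -> ~ K A -> exists e, (forall B, K B -> sat B e) /\ ~ sat A e.
Proof.
  intros [Sigma HSigma] HA.
  assert (HA' : ~ forall e, Sigma e -> sat A e) by (intro H; apply HA, HSigma, H).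
  apply not_all_ex_not in HA' as [e He]. apply imply_to_and in He as [He HAe].
  exists e; split; [intros B HB; exact (proj1 (HSigma B) HB e He) | exact HAe].
Qed.

Lemma sat_sym {A : algebra} {s t : term} : sat A (s, t) -> sat A (t, s).
Proof. intros H v; symmetry; apply H. Qed.

Lemma sat_trans {A : algebra} {s t u : term} : sat A (s, t) -> sat A (t, u) -> sat A (s, u).
Proof. intros H1 H2 v; exact (eq_trans (H1 v) (H2 v)). Qed.

Lemma sat_add_l {A : algebra} {s t : term} (z : term) : sat A (s, t) -> sat A (Add z s, Add z t).
Proof. intros H v; simpl; f_equal; apply H. Qed.

Lemma sat_mul_r {A : algebra} {s t : term} (z : term) : sat A (s, t) -> sat A (Mul s z, Mul t z).
Proof. intros H v; simpl; f_equal; apply H. Qed.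

Fixpoint subst (f : nat -> term) (t : term) : term :=
  match t with
  | Var n => f n
  | Add s u => Add (subst f s) (subst f u)
  | Mul s u => Mul (subst f s) (subst f u)
  end.

Lemma eval_subst (A : algebra) (v : nat -> car A) (f : nat -> term) (t : term) :
  eval A v (subst f t) = eval A (fun n => eval A v (f n)) t.
Proof. induction t; simpl; congruence. Qed.

Lemma sat_subst {A : algebra} {s t : term} (f : nat -> term) :
  sat A (s, t) -> sat A (subst f s, subst f t).
Proof. intros H v; simpl; rewrite !eval_subst; apply H. Qed.

Fixpoint occurs (n : nat) (t : term) : bool :=
  match t with
  | Var m => Nat.eqb m n
  | Add s u | Mul s u => occurs n s || occurs n u
  end.

Definition same_vars (s t : term) : Prop := forall n, occurs n s = occurs n t.

Lemma eval_ext (A : algebra) (v w : nat -> car A) (t : term) :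
  (forall n, occurs n t = true -> v n = w n) -> eval A v t = eval A w t.
Proof.
  induction t as [m | t1 IH1 t2 IH2 | t1 IH1 t2 IH2]; simpl; intro H;
    [apply H, Nat.eqb_refl | ..].
  all: f_equal; [apply IH1 | apply IH2]; intros n Hn; apply H, orb_true_iff; auto.
Qed.

Lemma s7_add_eq_one (x y : s7) : s7_add x y = S7one <-> x = S7one /\ y = S7one.
Proof. destruct x, y; split; cbn; intuition congruence. Qed.

Lemma s7_mul_eq_one (x y : s7) : s7_mul x y = S7one <-> x = S7one /\ y = S7one.
Proof. destruct x, y; split; cbn; intuition congruence. Qed.

Lemma eval_S7_inf (r : nat -> s7) (t : term) (n : nat) :
  occurs n t = true -> r n = S7inf -> eval S7 r t = S7inf.
Proof.
  induction t as [m | t1 IH1 t2 IH2 | t1 IH1 t2 IH2]; simpl; intros Hn Hr;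
    [apply Nat.eqb_eq in Hn; subst; exact Hr | ..].
  all: apply orb_true_iff in Hn as [Hn | Hn];
    [pose proof (IH1 Hn Hr) as E | pose proof (IH2 Hn Hr) as E];
    destruct (eval S7 r t1), (eval S7 r t2); try discriminate E; reflexivity.
Qed.

Lemma eval_S7_one (r : nat -> s7) (t : term) :
  eval S7 r t = S7one <-> (forall n, occurs n t = true -> r n = S7one).
Proof.
  induction t as [m | t1 IH1 t2 IH2 | t1 IH1 t2 IH2]; simpl;
    [ split; [intros H n Hn; apply Nat.eqb_eq in Hn; subst; exact H | intro H; apply H, Nat.eqb_refl]
    | .. ].
  all: rewrite ?s7_add_eq_one, ?s7_mul_eq_one, IH1, IH2; split;
    [ intros [H1 H2] n Hn; apply orb_true_iff in Hn as [Hn | Hn]; auto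
    | intro H; split; intros n Hn; apply H, orb_true_iff; auto ].
Qed.

Lemma S7_identity_of_a_sets (u v : term) : same_vars u v ->
  (forall r, eval S7 r u = S7a <-> eval S7 r v = S7a) -> sat S7 (u, v).
Proof.
  intros Huv Ha r; simpl.
  assert (one : forall s t, same_vars s t -> eval S7 r s = S7one -> eval S7 r t = S7one).
  { intros s t Hst Hs. apply eval_S7_one. intros n Hn.
    apply (proj1 (eval_S7_one r s) Hs). rewrite Hst; exact Hn. }
  destruct (eval S7 r u) eqn:Hu, (eval S7 r v) eqn:Hv; try reflexivity.
  - apply Ha in Hv; congruence.
  - rewrite (one v u (fun n => eq_sym (Huv n)) Hv) in Hu; discriminate.
  - apply Ha in Hu; congruence.
  - apply Ha in Hu; congruence.
  - rewrite (one u v Huv Hu) in Hv; discriminate.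
  - apply Ha in Hv; congruence.
Qed.

Lemma eval_M2_single_inf (n : nat) (t : term) :
  eval M2 (fun m => if Nat.eqb m n then M2inf else M2one) t = M2inf <-> occurs n t = true.
Proof.
  induction t as [m | t1 IH1 t2 IH2 | t1 IH1 t2 IH2]; simpl;
    [destruct (Nat.eqb m n); split; congruence | ..].
  all: rewrite orb_true_iff, <- IH1, <- IH2;
    destruct (eval M2 _ t1), (eval M2 _ t2); simpl; intuition congruence.
Qed.

Lemma M2_same_vars (u v : term) : sat M2 (u, v) -> same_vars u v.
Proof.
  intros H n. specialize (H (fun m => if Nat.eqb m n then M2inf else M2one)).
  apply eq_true_iff_eq. rewrite <- (eval_M2_single_inf n u), <- (eval_M2_single_inf n v).
  simpl in H. split; intro E; [exact (eq_trans (eq_sym H) E) | exact (eq_trans H E)].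
Qed.

Definition s7_of_m2 (z : m2) : s7 := match z with M2one => S7one | M2inf => S7inf end.

Lemma eval_s7_of_m2 (v : nat -> m2) (t : term) :
  eval S7 (fun n => s7_of_m2 (v n)) t = s7_of_m2 (eval M2 v t).
Proof.
  induction t as [n | t1 IH1 t2 IH2 | t1 IH1 t2 IH2]; simpl; [reflexivity | ..];
    rewrite IH1, IH2; destruct (eval M2 v t1), (eval M2 v t2); reflexivity.
Qed.

Lemma M2_sat_of_S7 (e : identity) : sat S7 e -> sat M2 e.
Proof.
  intros H v. specialize (H (fun n => s7_of_m2 (v n))). rewrite !eval_s7_of_m2 in H.
  destruct (eval M2 v (fst e)), (eval M2 v (snd e)); simpl in H; congruence.
Qed.

Ltac check_two_variables :=
  let v := fresh "v" in intro v; unfold x_, y_; simpl; destruct (v 0), (v 1); reflexivity.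

Definition phi (z : s7) : term :=
  match z with
  | S7one => Mul x_ x_
  | S7a => Mul (Mul x_ x_) y_
  | S7inf => Mul (Mul x_ x_) (Mul y_ y_)
  end.

Definition xsq_identity : identity := (phi S7a, phi S7inf).

Lemma S7_fails_xsq : ~ sat S7 xsq_identity.
Proof. intro H. discriminate (H (fun n => if Nat.eqb n 0 then S7one else S7a)). Qed.

Lemma M2_xsq : sat M2 xsq_identity.
Proof. check_two_variables. Qed.

Lemma N_xsq (A : algebra) : sat A N_identity -> sat A xsq_identity.
Proof.
  intro H.
  exact (sat_trans H (sat_sym (sat_subst (fun n => if Nat.eqb n 1 then Mul y_ y_ else Var n) H))).
Qed.

Lemma phi_add (a b : s7) : sat S7 (Add (phi a) (phi b), phi (s7_add a b)).
Proof. destruct a, b; check_two_variables. Qed.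

Lemma phi_mul (a b : s7) : sat S7 (Mul (phi a) (phi b), phi (s7_mul a b)).
Proof. destruct a, b; check_two_variables. Qed.

Lemma S7_subst_phi (r : nat -> s7) (t : term) :
  sat S7 (subst (fun n => phi (r n)) t, phi (eval S7 r t)).
Proof.
  induction t as [n | t1 IH1 t2 IH2 | t1 IH1 t2 IH2]; intro w; [reflexivity | ..];
    specialize (IH1 w); specialize (IH2 w); simpl in IH1, IH2 |- *; rewrite IH1, IH2;
    [exact (phi_add _ _ w) | exact (phi_mul _ _ w)].
Qed.

Lemma xsq_of_phi_collapse (B : algebra) (a b : s7) :
  (forall e, sat S7 e -> sat B e) -> a <> b -> sat B (phi a, phi b) -> sat B xsq_identity.
Proof.
  intros HB Hab.
  assert (I1 : sat B (Mul (phi S7inf) y_, phi S7inf)) by (apply HB; check_two_variables).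
  assert (I2 : sat B (phi S7inf, Mul (phi S7a) y_)) by (apply HB; check_two_variables).
  assert (one_a : sat B (phi S7one, phi S7a) -> sat B xsq_identity)
    by (intro H; exact (sat_sym (sat_trans I2 (sat_mul_r y_ (sat_sym H))))).
  assert (one_inf : sat B (phi S7one, phi S7inf) -> sat B xsq_identity)
    by (intro H; exact (sat_trans (sat_mul_r y_ H) I1)).
  destruct a, b; intro H; try congruence;
    [ exact (sat_sym H) | exact (one_inf (sat_sym H)) | exact H
    | exact (one_a (sat_sym H)) | exact (one_inf H) | exact (one_a H) ].
Qed.

Lemma xsq_of_nonS7_identity (B : algebra) (e : identity) :
  (forall e', sat S7 e' -> sat B e') -> sat B e -> ~ sat S7 e -> sat B xsq_identity.
Proof.
  destruct e as [u v]; intros HB He Hfail.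
  apply not_all_ex_not in Hfail as [r Hr].
  apply (xsq_of_phi_collapse B (eval S7 r u) (eval S7 r v) HB Hr).
  exact (sat_trans (sat_sym (HB _ (S7_subst_phi r u)))
           (sat_trans (sat_subst (fun n => phi (r n)) He) (HB _ (S7_subst_phi r v)))).
Qed.

Definition alive (t : term) : Prop :=
  forall n, occurs n t = true -> exists r, eval S7 r t = S7a /\ r n = S7a.

Lemma alive_of_a_set_incl (u v : term) : alive u -> same_vars u v ->
  (forall r, eval S7 r u = S7a -> eval S7 r v = S7a) -> alive v.
Proof.
  intros Hu Huv Hincl n Hn. rewrite <- Huv in Hn.
  destruct (Hu n Hn) as [r [Hr Hrn]]. exists r; auto.
Qed.

Lemma dead_sq (B : algebra) (u : term) : (forall e, sat S7 e -> sat B e) ->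
  sat B xsq_identity -> ~ alive u -> sat B (u, Mul u u).
Proof.
  intros HB Hxsq Hdead.
  apply not_all_ex_not in Hdead as [x Hx]. apply imply_to_and in Hx as [Hocc Hno].
  (* x witnesses that u is dead: u is oo whenever x is not 1 *)
  assert (expand : sat S7 (u, Add u (Mul (Mul (Var x) (Var x)) u))).
  { intro r; simpl. destruct (r x) eqn:Hx.
    - rewrite (eval_S7_inf r u x Hocc Hx). reflexivity.
    - destruct (eval S7 r u) eqn:Hu; try reflexivity; exfalso.
      + apply Hno; exists r; auto.
      + rewrite (proj1 (eval_S7_one r u) Hu x Hocc) in Hx; discriminate.
    - destruct (eval S7 r u); reflexivity. }
  assert (contract : sat S7 (Add u (Mul (Mul (Var x) (Var x)) (Mul u u)), Mul u u)).
  { intro r; simpl. destruct (r x) eqn:Hx.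
    - rewrite (eval_S7_inf r u x Hocc Hx). reflexivity.
    - destruct (eval S7 r u) eqn:Hu; try reflexivity.
      rewrite (proj1 (eval_S7_one r u) Hu x Hocc) in Hx; discriminate.
    - destruct (eval S7 r u); reflexivity. }
  assert (Hsq : sat B (Mul (Mul (Var x) (Var x)) u, Mul (Mul (Var x) (Var x)) (Mul u u)))
    by exact (sat_subst (fun n => if Nat.eqb n 0 then Var x else u) Hxsq).
  exact (sat_trans (HB _ expand) (sat_trans (sat_add_l u Hsq) (HB _ contract))).
Qed.

Lemma dead_same_vars_eq (B : algebra) (u v : term) : (forall e, sat S7 e -> sat B e) ->
  sat B xsq_identity -> ~ alive u -> ~ alive v -> same_vars u v -> sat B (u, v).
Proof.
  intros HB Hxsq Hu Hv Huv.
  apply (sat_trans (dead_sq B u HB Hxsq Hu)).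
  apply (fun H => sat_trans H (sat_sym (dead_sq B v HB Hxsq Hv))).
  apply HB, S7_identity_of_a_sets.
  - intro n; simpl; rewrite Huv; reflexivity.
  (* squares in S7 are never a *)
  - intro r; simpl; destruct (eval S7 r u), (eval S7 r v); split; discriminate.
Qed.

(* S7_power_quot I is the subalgebra of S7^I of the tuples with an entry other than 1, modulo
   the ideal of the tuples with an entry oo, which collapse sends to None; Some A stands for the
   tuple that is a on A and 1 elsewhere.  All its squares are None. *)
Section PowerQuotient.
Variable I : Type.

Definition coord (i : I) (x : option (I -> bool)) : s7 :=
  match x with None => S7inf | Some A => if A i then S7a else S7one end.

Definition collapse (g : I -> s7) : option (I -> bool) :=
  if excluded_middle_informative (exists i, g i = S7inf) then None
  else Some (fun i => s7_eqb (g i) S7a).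

Lemma collapse_inf (g : I -> s7) (i : I) : g i = S7inf -> collapse g = None.
Proof.
  intro Hi; unfold collapse.
  destruct excluded_middle_informative as [_ | Hg]; [reflexivity | exfalso; eauto].
Qed.

Lemma coord_collapse (g : I -> s7) (i : I) :
  (forall j, g j <> S7inf) -> coord i (collapse g) = g i.
Proof.
  intro Hg; unfold collapse.
  destruct excluded_middle_informative as [[j Hj] | _]; [exfalso; exact (Hg j Hj) |].
  specialize (Hg i); simpl; destruct (g i); simpl; congruence.
Qed.

Lemma collapse_coord (x : option (I -> bool)) :
  (exists i, coord i x <> S7one) -> collapse (fun i => coord i x) = x.
Proof.
  destruct x as [A |]; intros [i _]; [| exact (collapse_inf _ i eq_refl)].
  unfold collapse; destruct excluded_middle_informative as [[j Hj] | _].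
  - simpl in Hj; destruct (A j); discriminate.
  - f_equal; apply functional_extensionality; intro j; simpl; destruct (A j); reflexivity.
Qed.

Lemma collapse_injective (g h : I -> s7) :
  (forall i, h i <> S7inf) -> collapse g = collapse h -> forall i, g i = h i.
Proof.
  intros Hh E.
  assert (Hg : forall j, g j <> S7inf).
  { intros j Hj. apply (Hh j).
    rewrite <- (coord_collapse h j Hh), <- E, (collapse_inf g j Hj). reflexivity. }
  intro i. rewrite <- (coord_collapse g i Hg), E. apply coord_collapse, Hh.
Qed.

Lemma collapse_op (op : s7 -> s7 -> s7) (g h : I -> s7) :
  (forall y, op S7inf y = S7inf) -> (forall y, op y S7inf = S7inf) ->
  collapse (fun i => op (coord i (collapse g)) (coord i (collapse h)))
  = collapse (fun i => op (g i) (h i)).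
Proof.
  intros Hl Hr.
  destruct (classic (exists i, g i = S7inf)) as [[i Hi] | Hg].
  { rewrite (collapse_inf g i Hi), (collapse_inf _ i (Hl _)), (collapse_inf _ i); [reflexivity |].
    rewrite Hi; apply Hl. }
  destruct (classic (exists i, h i = S7inf)) as [[i Hi] | Hh].
  { rewrite (collapse_inf h i Hi), (collapse_inf _ i (Hr _)), (collapse_inf _ i); [reflexivity |].
    rewrite Hi; apply Hr. }
  f_equal; apply functional_extensionality; intro i.
  rewrite !coord_collapse; [reflexivity | ..]; intros j Hj; eauto.
Qed.

Definition not_all_one (x : option (I -> bool)) : Prop := exists i, coord i x <> S7one.

Lemma not_all_one_collapse (g : I -> s7) (i : I) : g i <> S7one -> not_all_one (collapse g).
Proof.
  intro Hi. exists i.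
  destruct (classic (exists j, g j = S7inf)) as [[j Hj] | Hg].
  - rewrite (collapse_inf g j Hj). discriminate.
  - rewrite coord_collapse; [exact Hi |]. intros j Hj; eauto.
Qed.

Lemma not_all_one_op (op : s7 -> s7 -> s7) (x y : option (I -> bool)) :
  (forall a b, op a b = S7one -> a = S7one) ->
  not_all_one x -> not_all_one (collapse (fun i => op (coord i x) (coord i y))).
Proof.
  intros Hop [i Hi]. apply (not_all_one_collapse _ i). intro H; exact (Hi (Hop _ _ H)).
Qed.

Definition power_quot_op (op : s7 -> s7 -> s7) (Hop : forall a b, op a b = S7one -> a = S7one)
    (x y : {z | not_all_one z}) : {z | not_all_one z} :=
  exist _ _ (not_all_one_op op (proj1_sig x) (proj1_sig y) Hop (proj2_sig x)).

Definition S7_power_quot : algebra :=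
  Algebra {z | not_all_one z}
    (power_quot_op s7_add (fun a b H => proj1 (proj1 (s7_add_eq_one a b) H)))
    (power_quot_op s7_mul (fun a b H => proj1 (proj1 (s7_mul_eq_one a b) H))).

Lemma eval_power_quot (tau : nat -> S7_power_quot) (t : term) :
  proj1_sig (eval S7_power_quot tau t)
  = collapse (fun i => eval S7 (fun n => coord i (proj1_sig (tau n))) t).
Proof.
  induction t as [n | t1 IH1 t2 IH2 | t1 IH1 t2 IH2]; simpl;
    [symmetry; apply collapse_coord, proj2_sig | ..];
    rewrite IH1, IH2; apply collapse_op; intro z; destruct z; reflexivity.
Qed.

Lemma power_quot_eq (x y : S7_power_quot) : proj1_sig x = proj1_sig y -> x = y.
Proof. apply eq_sig_hprop; intros; apply proof_irrelevance. Qed.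

Lemma power_quot_sat (e : identity) : sat S7 e -> sat S7_power_quot e.
Proof.
  intros He tau. apply power_quot_eq. rewrite !eval_power_quot.
  f_equal; apply functional_extensionality; intro i; apply He.
Qed.

Lemma power_quot_N : sat S7_power_quot N_identity.
Proof.
  intro tau. apply power_quot_eq. rewrite !eval_power_quot.
  destruct (proj2_sig (tau 0)) as [i Hi].
  assert (Hsq : forall z, z <> S7one -> s7_mul z z = S7inf) by (intros [] Hz; try reflexivity; congruence).
  unfold N_identity, x_, y_; simpl.
  rewrite (collapse_inf _ i (Hsq _ Hi)), (collapse_inf _ i); [reflexivity |].
  rewrite (Hsq _ Hi); reflexivity.
Qed.

Lemma power_quot_in_N : Nvar S7_power_quot.
Proof. split; [apply Vgen_iff, power_quot_sat | exact power_quot_N]. Qed.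

End PowerQuotient.

Section Separation.
Variables p q : term.
Hypothesis p_alive : alive p.
Hypothesis pq_vars : same_vars p q.
Variable r0 : nat -> s7.
Hypothesis r0_p : eval S7 r0 p = S7a.

(* One coordinate for each evaluation of p to a; coordinate r of the separating valuation
   is the S7-valuation r itself. *)
Definition witness : Type := {r : nat -> s7 | eval S7 r p = S7a}.

Definition sep_point (n : nat) : option (witness -> bool) :=
  if occurs n p then Some (fun r => s7_eqb (proj1_sig r n) S7a) else None.

Lemma sep_point_not_all_one (n : nat) : not_all_one witness (sep_point n).
Proof.
  unfold sep_point, not_all_one. destruct (occurs n p) eqn:Hn.
  - destruct (p_alive n Hn) as [r [Hr Hrn]].
    exists (exist _ r Hr); simpl; rewrite Hrn; discriminate.
  - exists (exist _ r0 r0_p); discriminate.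
Qed.

Definition sep_valuation (n : nat) : S7_power_quot witness :=
  exist _ (sep_point n) (sep_point_not_all_one n).

Lemma eval_sep_valuation (t : term) : (forall n, occurs n t = true -> occurs n p = true) ->
  proj1_sig (eval (S7_power_quot witness) sep_valuation t)
  = collapse witness (fun r => eval S7 (proj1_sig r) t).
Proof.
  intro Ht. rewrite eval_power_quot. f_equal; apply functional_extensionality; intros [r Hr].
  apply eval_ext. intros n Hn. specialize (Ht n Hn).
  simpl; unfold sep_point; rewrite Ht; simpl.
  destruct (r n) eqn:Hrn; [| reflexivity | reflexivity].
  rewrite (eval_S7_inf r p n Ht Hrn) in Hr; discriminate.
Qed.

Lemma separation : (forall C, Nvar C -> sat C (p, q)) -> eval S7 r0 q = S7a.
Proof.
  intro HN.
  pose proof (f_equal (@proj1_sig _ _) (HN _ (power_quot_in_N witness) sep_valuation)) as E.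
  simpl in E. rewrite (eval_sep_valuation p), (eval_sep_valuation q) in E;
    [| intros n Hn; rewrite pq_vars; exact Hn | intros n Hn; exact Hn].
  symmetry in E. rewrite <- r0_p.
  refine (collapse_injective witness _ _ _ E (exist _ r0 r0_p)).
  intros [r Hr]; simpl; rewrite Hr; discriminate.
Qed.

End Separation.

Lemma join_of_xsq (B : algebra) (e : identity) : Vgen S7 B -> sat B xsq_identity ->
  sat M2 e -> (forall C, Nvar C -> sat C e) -> sat B e.
Proof.
  destruct e as [u v]. intros HB Hxsq HM HN. pose proof (proj1 (Vgen_iff S7 B) HB) as HS7.
  pose proof (M2_same_vars u v HM) as Huv.
  assert (Hvu : same_vars v u) by (intro n; symmetry; apply Huv).
  assert (uv : alive u -> forall r, eval S7 r u = S7a -> eval S7 r v = S7a)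
    by (intros Hu r Hr; exact (separation u v Hu Huv r Hr HN)).
  assert (vu : alive v -> forall r, eval S7 r v = S7a -> eval S7 r u = S7a)
    by (intros Hv r Hr; exact (separation v u Hv Hvu r Hr (fun C HC => sat_sym (HN C HC)))).
  destruct (classic (alive u)) as [Hu | Hu].
  - pose proof (alive_of_a_set_incl u v Hu Huv (uv Hu)) as Hv.
    apply HS7, S7_identity_of_a_sets; [exact Huv |].
    intro r; split; [apply (uv Hu) | apply (vu Hv)].
  - assert (Hv : ~ alive v) by (intro Hv; exact (Hu (alive_of_a_set_incl v u Hv Hvu (vu Hv)))).
    exact (dead_same_vars_eq B u v HS7 Hxsq Hu Hv Huv).
Qed.

Theorem proposition3p14 :
  proper_subvariety (vjoin (Vgen M2) Nvar) (Vgen S7) /\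
  (forall K : aclass, proper_subvariety K (Vgen S7) ->
     subclass K (vjoin (Vgen M2) Nvar)).
Proof.
  split.
  - split; [apply gen_is_variety | split].
    + intros B HB. apply Vgen_iff. intros e He. apply (proj1 (gen_iff _ _) HB).
      intros A [HA | [HA _]]; apply (proj1 (Vgen_iff _ A) HA); [apply M2_sat_of_S7 |]; exact He.
    + exists S7. split; [apply Vgen_iff; auto |].
      intro HS7. apply S7_fails_xsq, (proj1 (gen_iff _ _) HS7).
      intros A [HA | [_ HA]]; [apply (proj1 (Vgen_iff M2 A) HA), M2_xsq | apply N_xsq, HA].
  - intros K [HK [HKS7 [A [HA HnA]]]] B HB.
    assert (HS7 : ~ K S7) by (intro HS7; apply HnA, HA; [exact HK | intros X ->; exact HS7]).
    destruct (variety_omits_identity K S7 HK HS7) as [e [HKe He]].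
    apply gen_iff. intros g Hg.
    apply (join_of_xsq B g (HKS7 B HB)).
    + apply (xsq_of_nonS7_identity B e); [apply Vgen_iff, HKS7, HB | apply HKe, HB | exact He].
    + apply Hg; left; apply Vgen_iff; auto.
    + intros C HC; apply Hg; right; exact HC.
Qed.
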